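(* Let $q$ be a prime power and $n\ge3$. Then $\dfrac{\mathbb{E}_q(n)}{|\mathbb{P}_q(n)|}\le\dfrac12$, and equality occurs only if $n=3$ and $q\in\{2,5\}$.
   Context: $\mathbb{P}_q(n)$ denotes the set of all subspaces of $\mathbb{F}_q^n$. For subspaces $X,Y$ the subspace distance is $d_S(X,Y)=\dim X+\dim Y-2\dim(X\cap Y)$. A linear code in $\mathbb{P}_q(n)$ is a subset $\mathcal{U}\subseteq\mathbb{P}_q(n)$ with $\{0\}\in\mathcal{U}$ for which there exists a map $\boxplus:\mathcal{U}\times\mathcal{U}\to\mathcal{U}$ such that (i) $(\mathcal{U},\boxplus)$ is an abelian group; (ii) its identity element is $\{0\}$; (iii) $X\boxplus X=\{0\}$ for all $X\in\mathcal{U}$; (iv) $d_S(Y_1\boxplus X,Y_2\boxplus X)=d_S(Y_1,Y_2)$ for all $Y_1,Y_2,X\in\mathcal{U}$. It is equidistant if there is $r$ with $d_S(X,Y)=r$ for all distinct $X,Y\in\mathcal{U}$. $\mathbb{E}_q(n)$ denotes the maximum size of an equidistant linear code in $\mathbb{P}_q(n)$. *)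

From HB Require Import structures.
From mathcomp Require Import all_boot all_order all_algebra all_field.
From mathcomp Require Import boolp.
Set Implicit Arguments. Unset Strict Implicit. Unset Printing Implicit Defensive.
Import GRing.Theory.
Local Open Scope ring_scope.

(* Subspaces of F_q^n, i.e. elements of P_q(n); over a finite field they form
   a finite type (transported from matrices via the row-space encoding). *)
Definition subsp (F : finFieldType) (n : nat) : Type := {vspace 'rV[F]_n}.
HB.instance Definition _ (F : finFieldType) n :=
  Finite.copy (subsp F n)
    (can_type (@vector.VectorInternalTheory.vs2mxK F 'rV[F]_n)).

Section Codes.
Variables (F : finFieldType) (n : nat).

Local Notation subsp := (subsp F n).

Definition Pqn : {set subsp} := [set: subsp].

Definition dS (X Y : subsp) : nat :=
  (\dim X + \dim Y - 2 * \dim (X :&: Y))%N.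

Definition linear_code (U : {set subsp}) : Prop :=
  (0%VS : subsp) \in U /\
  exists op : subsp -> subsp -> subsp,
    (forall X Y, X \in U -> Y \in U -> op X Y \in U) /\
        (forall X Y Z, X \in U -> Y \in U -> Z \in U ->
            op X (op Y Z) = op (op X Y) Z) /\
        (forall X Y, X \in U -> Y \in U -> op X Y = op Y X) /\
        (forall X, X \in U -> op 0%VS X = X /\ op X 0%VS = X) /\
        (forall X, X \in U -> exists2 Y, Y \in U & op X Y = 0%VS) /\
        (forall X, X \in U -> op X X = 0%VS) /\
        (forall Y1 Y2 X, Y1 \in U -> Y2 \in U -> X \in U ->
            dS (op Y1 X) (op Y2 X) = dS Y1 Y2).

Definition equidistant (U : {set subsp}) : Prop :=
  exists r : nat, forall X Y, X \in U -> Y \in U -> X != Y -> dS X Y = r.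

Definition equidistant_linear_code (U : {set subsp}) : Prop :=
  linear_code U /\ equidistant U.

Definition Eqn : nat :=
  \max_(U : {set subsp} | `[< equidistant_linear_code U >]) #|U|.

End Codes.

(* Every nonzero word of an equidistant linear code U has the same dimension
   2s, and two distinct nonzero words meet in dimension s.  Pick a line L and
   a hyperplane H with L :&: H = 0; the map X |-> (X + L if X <= H, else
   X :&: H) flips the parity of dimensions.  When s >= 2, or when s = 1 and
   n >= 4 (planes pairwise meeting in lines all contain a common line or all
   lie in a common 3-space, which dictates the choice of L and H), this map is
   injective on U, so U and its image fill at most the even and the odd
   dimensional subspaces, missing some even one: 2|U| < |P_q(n)|.  For s = 1
   and n = 3, U consists of 0 and planes, and |P_q(3)| = 2(q^2 + q + 2).
   In the equality case U is an elementary abelian 2-group of order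
   q^2 + q + 2, and q^2 + q + 2 = 2^k has only q = 0, 1, 2, 5, 90: in the ring
   Z[w], w = (1 + sqrt -7)/2, the element q + w of norm 2^k must be a unit
   times w^k or conj(w)^k, so the w-coefficient of w^k is +-1, which a
   periodicity check modulo 2^14 * 40961 excludes for k >= 14. *)

From Stdlib Require Import ZArith Lia.
From HB Require Import structures.
From mathcomp Require Import all_boot all_order all_algebra all_field all_fingroup all_solvable.
From mathcomp Require Import boolp zify ssrZ ring lra.
Set Implicit Arguments. Unset Strict Implicit. Unset Printing Implicit Defensive.
Import GRing.Theory Num.Theory.

Section Iterates.
Variables (A : eqType) (f : A -> A) (P : pred A).

Fixpoint all_iter (j : nat) (x y : A) : bool :=
  if j is j'.+1 then P x && all_iter j' (f x) y else x == y.

Lemma all_iterP j x y :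
  all_iter j x y -> iter j f x = y /\ forall i, i < j -> P (iter i f x).
Proof.
elim: j x => [|j IHj] x; first by move=> /eqP ->.
case/andP=> Px /IHj [fjx Pf]; split; first by rewrite iterSr.
by case=> [|i] // ltij; rewrite iterSr; apply: Pf.
Qed.

Lemma all_iter_cycle T x : 0 < T -> all_iter T x x -> forall i, P (iter i f x).
Proof.
move=> T_gt0 /all_iterP [fTx Pf] i.
have iter_mulT m : iter (m * T) f x = x.
  by elim: m => [|m IHm] //; rewrite mulSn iterD IHm fTx.
by rewrite (divn_eq i T) addnC iterD iter_mulT Pf // ltn_pmod.
Qed.

End Iterates.

Section RamanujanNagell.
Local Open Scope Z_scope.

(* The pair (a, b) stands for a + b w, where w^2 = w - 2 and 2 = w * conj w. *)
Definition normw (x : Z * Z) : Z := x.1 * x.1 + x.1 * x.2 + 2 * x.2 * x.2.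
Definition mulw (x : Z * Z) : Z * Z := (-2 * x.2, x.1 + x.2).
Definition conjw (x : Z * Z) : Z * Z := (x.1 + x.2, - x.2).
Definition oppw (x : Z * Z) : Z * Z := (- x.1, - x.2).
Definition powerw (k : nat) : Z * Z := iter k mulw (1, 0).

Definition odd_pair (x : Z * Z) : bool := Z.odd x.1 || Z.odd x.2.

Definition unit_multiple_powerw (k : nat) (x : Z * Z) : Prop :=
  [\/ x = powerw k, x = oppw (powerw k), x = conjw (powerw k)
    | x = oppw (conjw (powerw k))].

Lemma odd_normw x : Z.odd (normw x) = Z.odd x.1 && ~~ Z.odd x.2.
Proof.
rewrite /normw !Z.odd_add !Z.odd_mul.
by case: (Z.odd x.1); case: (Z.odd x.2).
Qed.

Lemma normw_conjw x : normw (conjw x) = normw x.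
Proof. by case: x => a b; rewrite /normw /conjw; cbn [fst snd]; ring. Qed.

Lemma conjwK : involutive conjw.
Proof. by case=> a b; rewrite /conjw; cbn [fst snd]; f_equal; ring. Qed.

Lemma odd_pair_conjw x : odd_pair (conjw x) = odd_pair x.
Proof.
rewrite /odd_pair /conjw; cbn [fst snd].
by rewrite Z.odd_add Z.odd_opp; case: (Z.odd x.1); case: (Z.odd x.2).
Qed.

Lemma mulw_oppw x : mulw (oppw x) = oppw (mulw x).
Proof. by rewrite /mulw /oppw; cbn [fst snd]; f_equal; ring. Qed.

Lemma odd_pair_oppw x : odd_pair (oppw x) = odd_pair x.
Proof. by rewrite /odd_pair /oppw !Z.odd_opp. Qed.

Lemma mulw_conjw_mulw x :
  mulw (conjw (mulw x)) = (2 * (conjw x).1, 2 * (conjw x).2).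
Proof. by rewrite /mulw /conjw; cbn [fst snd]; f_equal; ring. Qed.

Lemma conjw_oppw x : conjw (oppw x) = oppw (conjw x).
Proof. by rewrite /conjw /oppw; cbn [fst snd]; f_equal; ring. Qed.

Lemma unit_multiple_conjw k x :
  unit_multiple_powerw k (conjw x) -> unit_multiple_powerw k x.
Proof.
move=> ux; rewrite -[x]conjwK; case: ux => ->; rewrite ?conjw_oppw ?conjwK.
- exact: Or43.
- exact: Or44.
- exact: Or41.
- exact: Or42.
Qed.

Lemma normw_mulw x : normw (mulw x) = 2 * normw x.
Proof. by rewrite /normw /mulw; cbn [fst snd]; ring. Qed.

Lemma powerwS k : powerw k.+1 = mulw (powerw k).
Proof. exact: iterS. Qed.

Lemma mulw_half x : ~~ Z.odd x.1 -> x = mulw (Z.div2 x.1 + x.2, - Z.div2 x.1).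
Proof.
case: x => a b; rewrite /mulw; cbn [fst snd] => a_even.
have := Z.div2_odd a; rewrite (negPf a_even) => a_half.
by f_equal; lia.
Qed.

Lemma normw_pow2 k x :
  normw x = 2 ^ Z.of_nat k -> odd_pair x -> unit_multiple_powerw k x.
Proof.
elim: k x => [|k IHk] x Nx x_odd.
  have x2_0 : x.2 = 0 by move: Nx; rewrite /normw; nia.
  have [x1_1 | x1_m1] : x.1 = 1 \/ x.1 = -1 by move: Nx; rewrite /normw x2_0; nia.
    by apply: Or41; case: x x1_1 x2_0 {Nx x_odd} => a b /= -> ->.
  by apply: Or42; case: x x1_m1 x2_0 {Nx x_odd} => a b /= -> ->.
have {Nx} N2 : normw x = 2 * 2 ^ Z.of_nat k.
  by rewrite Nx Nat2Z.inj_succ Z.pow_succ_r //; apply: Zle_0_nat.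
wlog x1_even : x N2 x_odd / ~~ Z.odd x.1.
  move=> wlog_even; case x1_odd: (Z.odd x.1); last by apply: wlog_even; rewrite ?x1_odd.
  apply: unit_multiple_conjw; apply: wlog_even; rewrite ?normw_conjw ?odd_pair_conjw //.
  have : ~~ Z.odd (normw x) by rewrite N2 Z.odd_mul.
  by rewrite /conjw odd_normw Z.odd_add x1_odd /=; case: (Z.odd x.2).
have x2_odd : Z.odd x.2 by move: x_odd; rewrite /odd_pair (negPf x1_even).
pose y := (Z.div2 x.1 + x.2, - Z.div2 x.1).
have x_mulw : x = mulw y := mulw_half x1_even.
have y_odd : odd_pair y.
  by rewrite /odd_pair /y; cbn [fst snd]; rewrite Z.odd_add Z.odd_opp x2_odd; case: Z.odd.
have Ny : normw y = 2 ^ Z.of_nat k by move: N2; rewrite {1}x_mulw normw_mulw; lia.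
(* y = +-conj(w)^k with k > 0 would make x = w * y divisible by w * conj w = 2. *)
move: x_odd; rewrite x_mulw.
case: (IHk y Ny y_odd) => ->; rewrite ?mulw_oppw ?odd_pair_oppw -?powerwS => odd_x.
- exact: Or41.
- exact: Or42.
- case: k {IHk N2 Ny} odd_x => [|k] odd_x; first exact: Or41.
  by move: odd_x; rewrite powerwS mulw_conjw_mulw /odd_pair !Z.odd_mul.
- case: k {IHk N2 Ny} odd_x => [|k] odd_x; first exact: Or42.
  by move: odd_x; rewrite powerwS mulw_conjw_mulw /odd_pair !Z.odd_mul.
Qed.

Lemma powerw_coef_pm1 (q : Z) k :
  q * q + q + 2 = 2 ^ Z.of_nat k -> (powerw k).2 \in [:: 1; -1].
Proof.
move=> Nq; have Nx : normw (q, 1) = 2 ^ Z.of_nat k by rewrite /normw; cbn [fst snd]; lia.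
have odd_x : odd_pair (q, 1) by rewrite /odd_pair orbT.
have : (powerw k).2 = 1 \/ (powerw k).2 = -1.
  by case: (normw_pow2 Nx odd_x) => /(congr1 snd); rewrite /oppw /conjw; cbn [fst snd]; lia.
by case=> ->.
Qed.

Definition modw (m : Z) (x : Z * Z) : Z * Z := (x.1 mod m, x.2 mod m).

Lemma iter_modw_mulw m k x : m <> 0 ->
  iter k (modw m \o mulw) (modw m x) = modw m (iter k mulw x).
Proof.
move=> m_neq0; elim: k => [|k IHk] //; rewrite !iterS IHk /=.
rewrite /modw /mulw; cbn [fst snd].
by rewrite Z.mul_mod_idemp_r // Z.add_mod_idemp_l // Z.add_mod_idemp_r.
Qed.

(* 2^14 * 40961: modulo it the powers of w are periodic from w^14 on, with
   period 10 * 2^12. *)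
Definition powerw_modulus : Z := 671105024.
Definition powerw_period : nat := (10 * 2 ^ 12)%N.

Lemma powerw_coef_mod_large k : (14 <= k)%N ->
  (powerw k).2 mod powerw_modulus \notin [:: 1; powerw_modulus - 1].
Proof.
pose step := modw powerw_modulus \o mulw; pose x14 := iter 14 step (1, 0).
have cycle : all_iter step (fun x => x.2 \notin [:: 1; powerw_modulus - 1])
                      powerw_period x14 x14.
  by vm_compute.
move=> /subnK <-; have := all_iter_cycle (ltn0Sn _) cycle (k - 14).
by rewrite /x14 -iterD -[(1, 0)]/(modw powerw_modulus (1, 0)) iter_modw_mulw.
Qed.

Lemma ramanujan_nagell_Z (q : Z) k :
  0 <= q -> q * q + q + 2 = 2 ^ Z.of_nat k -> q \in [:: 0; 1; 2; 5; 90].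
Proof.
move=> q_ge0 Nq; have k_small : (k < 14)%N.
  rewrite ltnNge; apply/negP => /powerw_coef_mod_large.
  by move: (powerw_coef_pm1 Nq); rewrite !inE => /orP [] /eqP ->.
have q_le90 : q <= 90.
  have : 2 ^ Z.of_nat k <= 2 ^ 13 by apply: Z.pow_le_mono_r; lia.
  nia.
have table : all (fun q => all (fun k => (q * q + q + 2 != 2 ^ Z.of_nat k)
                 || (q \in [:: 0; 1; 2; 5; 90])) (iota 0 14))
             [seq Z.of_nat i | i <- iota 0 91].
  by vm_compute.
have q_in : q \in [seq Z.of_nat i | i <- iota 0 91].
  by rewrite -[q]Z2Nat.id // map_f // mem_iota; lia.
move: table => /allP /(_ q q_in) /allP /(_ k).
by rewrite mem_iota k_small Nq eqxx => /(_ isT).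
Qed.

End RamanujanNagell.

Lemma ramanujan_nagell (q k : nat) :
  q * q + q + 2 = 2 ^ k -> q \in [:: 0; 1; 2; 5; 90].
Proof.
move=> Nq; rewrite -(mem_map Nat2Z.inj).
by apply: (@ramanujan_nagell_Z _ k); [exact: Zle_0_nat | lia].
Qed.

Section VspaceFacts.
Variables (K : fieldType) (vT : vectType K).
Implicit Types (v : vT) (W X Y L H : {vspace vT}).
Local Notation n := (\dim {:vT}).

Lemma subv_dim_eq X Y : (X <= Y)%VS -> \dim Y <= \dim X -> X = Y.
Proof. by move=> sXY dYX; apply/eqP; rewrite eqEdim sXY. Qed.

Lemma dimv0_eq X : \dim X = 0%N -> X = 0%VS.
Proof. by move/eqP; rewrite dimv_eq0 => /eqP. Qed.

Lemma exists_notin_vspace W : \dim W < n -> exists v, v \notin W.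
Proof.
move=> dimW; have /subvPn [v _ vW] : ~~ (fullv <= W)%VS.
  by apply: contraTN dimW => /dimvS; rewrite -leqNgt.
by exists v.
Qed.

Lemma vline_cap_eq0 v W : v \notin W -> (<[v]> :&: W = 0)%VS.
Proof.
move=> vW; apply/eqP; rewrite -subv0; apply/subvP => x /memv_capP [/vlineP [k ->] kvW].
rewrite memv0; have [->|k_neq0] := eqVneq k 0%R; first by rewrite scale0r.
by move/(memvZ k^-1%R): kvW; rewrite scalerA mulVf // scale1r (negPf vW).
Qed.

Lemma dim_vline_notin v W : v \notin W -> \dim <[v]> = 1%N.
Proof. by move=> vW; rewrite dim_vline; case: eqP vW => // ->; rewrite mem0v. Qed.

Lemma exists_vspace_dim d : d <= n -> exists X, \dim X = d.
Proof.
elim: d => [|d IHd] d_le; first by exists 0%VS; rewrite dimv0.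
have [X dimX] := IHd (ltnW d_le).
have [v vX] : exists v, v \notin X by apply: exists_notin_vspace; rewrite dimX.
exists (X + <[v]>)%VS; rewrite dimv_disjoint_sum ?(dim_vline_notin vX) ?dimX ?addn1 //.
by rewrite capvC vline_cap_eq0.
Qed.

Lemma dimv_cap_hyperplane X H :
  (\dim H).+1 = n -> ~~ (X <= H)%VS -> (\dim (X :&: H)).+1 = \dim X.
Proof.
move=> dimH XH; have := dimv_sum_cap X H.
suff -> : \dim (X + H) = n by rewrite -dimH; lia.
apply/eqP; rewrite eqn_leq dimvS ?subvf //= -dimH ltn_neqAle dimvS ?addvSr // andbT.
apply: contra XH => /eqP dim_XH.
have -> : H = (X + H)%VS by apply: subv_dim_eq; rewrite ?addvSr ?dim_XH.
exact: addvSl.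
Qed.

Lemma exists_hyperplane_notin W v : v \notin W ->
  exists H, [/\ (\dim H).+1 = n, (W <= H)%VS & v \notin H].
Proof.
move=> vW; pose C := ((W + <[v]>)^C)%VS; exists (W + C)%VS.
have WC0 : (W :&: C = 0)%VS.
  apply/eqP; rewrite -subv0 -(capv_compl (W + <[v]>)).
  by apply: capvS; rewrite ?addvSl.
have dimWv : \dim (W + <[v]>) = (\dim W).+1.
  by rewrite dimv_disjoint_sum ?(dim_vline_notin vW) ?addn1 // capvC vline_cap_eq0.
have dimWC : (\dim (W + C)).+1 = n.
  rewrite dimv_disjoint_sum // dimv_compl dimWv -addSn subnKC //.
  by rewrite -dimWv dimvS ?subvf.
split=> //; first exact: addvSl.
apply/negP => vWC; have : (fullv <= W + C)%VS.
  by rewrite -(addv_complf (W + <[v]>)) !subv_add addvSl addvSr -memvE vWC.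
by move/dimvS; rewrite -dimWC ltnn.
Qed.

Lemma dimv_add_lines L L' :
  \dim L = 1%N -> \dim L' = 1%N -> L != L' -> \dim (L + L') = 2.
Proof.
move=> dimL dimL' neqLL'; have := dimv_sum_cap L L'; rewrite dimL dimL'.
suff -> : \dim (L :&: L') = 0%N by rewrite addn0.
apply: contraNeq neqLL' => cap_neq0.
have dim_cap : \dim (L :&: L') = 1%N by have := dimvS (capvSl L L'); rewrite dimL; lia.
have capL : (L :&: L')%VS = L by apply: subv_dim_eq; rewrite ?capvSl ?dim_cap ?dimL.
have capL' : (L :&: L')%VS = L' by apply: subv_dim_eq; rewrite ?capvSr ?dim_cap ?dimL'.
by rewrite -capL capL'.
Qed.

Lemma dimv_vline2 u v : u != 0%R -> v \notin <[u]>%VS -> \dim (<[u]> + <[v]>) = 2.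
Proof.
move=> u_neq0 v_notin.
have uv0 : (<[u]> :&: <[v]> = 0)%VS by rewrite capvC vline_cap_eq0.
by rewrite dimv_disjoint_sum // (dim_vline_notin v_notin) dim_vline u_neq0.
Qed.

Section PlanesMeetingInLines.
Variable U : {pred {vspace vT}}.
Hypothesis dimU : forall X, X \in U -> X <> 0%VS -> \dim X = 2.
Hypothesis capU : forall X Y, X \in U -> Y \in U -> X <> 0%VS -> Y <> 0%VS -> X <> Y ->
  \dim (X :&: Y) = 1%N.
Variables X0 Y0 : {vspace vT}.
Hypotheses (X0U : X0 \in U) (Y0U : Y0 \in U) (X0_neq0 : X0 <> 0%VS) (Y0_neq0 : Y0 <> 0%VS).
Hypothesis X0_neqY0 : X0 <> Y0.

Let dim_X0Y0 : \dim (X0 :&: Y0) = 1%N. Proof. exact: capU. Qed.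

Lemma subv_add_of_not_through Z : Z \in U -> Z <> 0%VS -> ~~ (X0 :&: Y0 <= Z)%VS ->
  (Z <= X0 + Y0)%VS.
Proof.
move=> ZU Z_neq0 pZ.
have Z_neqX0 : Z <> X0 by move=> ZX0; move: pZ; rewrite ZX0 capvSl.
have Z_neqY0 : Z <> Y0 by move=> ZY0; move: pZ; rewrite ZY0 capvSr.
have dima : \dim (Z :&: X0) = 1%N by apply: capU.
have dimb : \dim (Z :&: Y0) = 1%N by apply: capU.
have neq_ab : (Z :&: X0 != Z :&: Y0)%VS.
  apply: contraNneq pZ => eq_ab.
  have sab : (Z :&: X0 <= X0 :&: Y0)%VS by rewrite subv_cap capvSr eq_ab capvSr.
  by rewrite -(subv_dim_eq sab) ?capvSl // dima dim_X0Y0.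
have <- : (Z :&: X0 + Z :&: Y0)%VS = Z.
  apply: subv_dim_eq; first by rewrite subv_add !capvSl.
  by rewrite dimU // dimv_add_lines.
by apply: addvS; apply: capvSr.
Qed.

Lemma subv_add_all_of_not_through Z : Z \in U -> Z <> 0%VS -> ~~ (X0 :&: Y0 <= Z)%VS ->
  forall X, X \in U -> (X <= X0 + Y0)%VS.
Proof.
move=> ZU Z_neq0 pZ X XU; have [-> | /eqP X_neq0] := eqVneq X 0%VS; first exact: sub0v.
have [pX | /subv_add_of_not_through] := boolP (X0 :&: Y0 <= X)%VS; last exact.
have ZW := subv_add_of_not_through ZU Z_neq0 pZ.
apply: contraR pZ => XW.
have pXW : (X0 :&: Y0 <= X :&: (X0 + Y0))%VS.
  by rewrite subv_cap pX (subv_trans (capvSl _ _)) ?addvSl.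
have dim_XW : \dim (X :&: (X0 + Y0)) < \dim X.
  rewrite ltn_neqAle dimvS ?capvSl // andbT; apply: contra XW => /eqP dim_eq.
  have <- : (X :&: (X0 + Y0))%VS = X by apply: subv_dim_eq; rewrite ?capvSl ?dim_eq.
  exact: capvSr.
have XW_p : (X0 :&: Y0)%VS = (X :&: (X0 + Y0))%VS.
  by apply: subv_dim_eq => //; move: dim_XW; rewrite (dimU XU X_neq0) dim_X0Y0 ltnS.
have X_neqZ : X <> Z by move=> XZ; move: XW; rewrite XZ ZW.
have XZ_p : (X :&: Z)%VS = (X0 :&: Y0)%VS.
  apply: subv_dim_eq; first by rewrite XW_p capvS.
  by rewrite dim_X0Y0 capU.
by rewrite -XZ_p capvSr.
Qed.

End PlanesMeetingInLines.

End VspaceFacts.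

Lemma pred_expn3 m : (m ^ 3).-1 = (m ^ 2 + m + 1) * m.-1.
Proof. by case: m => // m; rewrite -subn1 /=; nia. Qed.

Lemma pred_expn2 m : (m ^ 2).-1 = m.+1 * m.-1.
Proof. by case: m => // m; rewrite -subn1 /=; nia. Qed.

Lemma subn_expn3 m : m ^ 3 - m = (m ^ 2 - m) * m.+1.
Proof. nia. Qed.

Section Subspaces.
Variables (F : finFieldType) (n : nat).
Local Notation subsp := (subsp F n).
Local Notation q := #|F|.

Lemma dim_fullv : \dim (fullv : subsp) = n.
Proof. by rewrite dimvf /dim /= mul1n. Qed.

Lemma dim_subsp_le (X : subsp) : \dim X <= n.
Proof. by rewrite -[leqRHS]dim_fullv dimvS ?subvf. Qed.

Lemma double_card_lt_parity (U : {set subsp}) (L H W : subsp) :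
  \dim L = 1%N -> (\dim H).+1 = n -> (L :&: H = 0)%VS ->
  (forall X, X \in U -> ~~ odd (\dim X)) ->
  {in U &, forall X Y, ~~ (X <= H)%VS -> ~~ (Y <= H)%VS ->
     (X :&: H = Y :&: H)%VS -> X = Y} ->
  ~~ odd (\dim W) -> W \notin U ->
  2 * #|U| < #|Pqn F n|.
Proof.
move=> dimL dimH LH0 evenU injH evenW WU.
have hypH : (\dim H).+1 = \dim (fullv : subsp) by rewrite dim_fullv.
have L_notin_H : ~~ (L <= H)%VS.
  by apply/negP => /capv_idPl LH; move: dimL; rewrite -LH LH0 dimv0.
pose phi (X : subsp) : subsp := if (X <= H)%VS then (X + L)%VS else (X :&: H)%VS.
have odd_phi X : odd (\dim (phi X)) = ~~ odd (\dim X).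
  rewrite /phi; case: ifP => XH; last first.
    by rewrite -(dimv_cap_hyperplane hypH (negbT XH)) /= negbK.
  rewrite dimv_disjoint_sum ?dimL ?addn1 //; apply/eqP; rewrite -subv0 -LH0.
  by rewrite capvC capvS.
have phi_inj : {in U &, injective phi}.
  move=> X Y XU YU; rewrite /phi.
  have add_cap Z : (Z <= H)%VS -> ((Z + L) :&: H)%VS = Z.
    by move=> ZH; rewrite -vspace_modl // LH0 addv0.
  have add_neq_cap Z Z' : (Z + L)%VS <> (Z' :&: H)%VS.
    move=> eqZZ'; move/negP: L_notin_H; apply.
    by rewrite (subv_trans (addvSr Z L)) // eqZZ' capvSr.
  case: ifP => XH; case: ifP => YH.
  - by move=> eqXY; rewrite -(add_cap X) // eqXY add_cap.
  - by move/add_neq_cap.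
  - by move/esym/add_neq_cap.
  - by apply: injH => //; rewrite ?XH ?YH.
pose E := [set X : subsp | ~~ odd (\dim X)].
have U_lt_E : #|U| < #|E|.
  apply: proper_card; apply/properP; split; last by exists W; rewrite ?inE.
  by apply/subsetP => X XU; rewrite inE evenU.
have U_le_notE : #|U| <= #|~: E|.
  rewrite -(card_in_imset phi_inj); apply/subset_leq_card/subsetP => _ /imsetP [X XU ->].
  by rewrite !inE odd_phi negbK evenU.
by rewrite /Pqn cardsT -(cardsC E); lia.
Qed.

Definition grass (d : nat) : {set subsp} := [set X : subsp | \dim X == d].

Lemma card_Pqn_grass : #|Pqn F n| = \sum_(d < n.+1) #|grass d|.
Proof.
rewrite /Pqn cardsT -sum1_card.
rewrite (partition_big (fun X : subsp => inord (\dim X) : 'I_n.+1) xpredT) //=.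
apply: eq_bigr => d _; rewrite -sum1_card; apply: eq_bigl => X; rewrite inE.
by rewrite -val_eqE /= inordK // ltnS dim_subsp_le.
Qed.

Lemma card_nonzero_vectors (Y : subsp) :
  #|[set v : 'rV[F]_n | (v \in Y) && (v != 0%R)]| = (q ^ \dim Y).-1.
Proof.
rewrite -card_vspace [in RHS](cardD1 0%R) mem0v add1n /=; apply: eq_card => v.
by rewrite !inE andbC.
Qed.

Lemma card_grass1 : #|grass 1| * q.-1 = (q ^ n).-1.
Proof.
have := card_nonzero_vectors fullv; rewrite dim_fullv => <-; rewrite -[RHS]sum1dep_card.
rewrite (partition_big (fun v : 'rV[F]_n => <[v]>%VS : subsp) (mem (grass 1))) /=; last first.
  by move=> v /andP [_ v_neq0]; rewrite inE dim_vline v_neq0.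
rewrite -[#|grass 1|]sum1_card big_distrl /=; apply: eq_bigr => X; rewrite inE => /eqP dimX.
have -> : q.-1 = (q ^ \dim X).-1 by rewrite dimX expn1.
rewrite mul1n -card_nonzero_vectors -sum1dep_card.
apply: eq_bigl => v; rewrite memvf /=; have [-> | v_neq0] := eqVneq v 0%R.
  by rewrite andbF.
rewrite andbT /=; apply/idP/eqP => [vX | <-]; last exact: memv_line.
by apply: (@subv_dim_eq _ _ <[v]>%VS X); rewrite -?memvE // dimX dim_vline v_neq0.
Qed.

Definition frames (Y : subsp) : {set 'rV[F]_n * 'rV[F]_n} :=
  [set ab | [&& ab.1 \in Y, ab.1 != 0%R, ab.2 \in Y & ab.2 \notin <[ab.1]>%VS]].

Lemma card_frames (Y : subsp) : #|frames Y| = (q ^ \dim Y).-1 * (q ^ \dim Y - q).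
Proof.
transitivity (\sum_(a | (a \in Y) && (a != 0%R)) \sum_(b | (b \in Y) && (b \notin <[a]>%VS)) 1).
  rewrite pair_big_dep sum1dep_card; apply: eq_card => ab.
  by rewrite !inE /= !andbA.
rewrite (eq_bigr (fun _ => q ^ \dim Y - q)) ?sum_nat_cond_const ?card_nonzero_vectors //.
move=> a /andP [aY a_neq0]; rewrite sum1dep_card.
have -> : [set b | (b \in Y) && (b \notin <[a]>%VS)] =
          [set b | b \in Y] :\: [set b | b \in <[a]>%VS].
  by apply/setP => b; rewrite !inE andbC.
have aY_sub : [set b | b \in <[a]>%VS] \subset [set b | b \in Y].
  by apply/subsetP => b; rewrite !inE => /vlineP [k ->]; apply: memvZ.
by rewrite cardsD (setIidPr aY_sub) !cardsE !card_vspace dim_vline a_neq0 expn1.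
Qed.

Lemma card_grass2 : #|grass 2| * ((q ^ 2).-1 * (q ^ 2 - q)) = (q ^ n).-1 * (q ^ n - q).
Proof.
have := card_frames fullv; rewrite dim_fullv => <-; rewrite -[RHS]sum1_card.
rewrite (partition_big (fun ab => (<[ab.1]> + <[ab.2]>)%VS : subsp) (mem (grass 2))) /=;
  last by move=> [a b]; rewrite !inE /= => /and4P [_ a_neq0 _ b_notin]; rewrite dimv_vline2.
rewrite -[#|grass 2|]sum1_card big_distrl /=; apply: eq_bigr => X; rewrite inE => /eqP dimX.
rewrite mul1n -dimX -card_frames -sum1_card; apply: eq_bigl => -[a b].
rewrite !inE /= !memvf /=; apply/and4P/andP => [[aX a_neq0 bX b_notin] | [/andP [a_neq0 b_notin]]].
  split; first by rewrite a_neq0.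
  by apply/eqP/subv_dim_eq; rewrite ?subv_add -?memvE ?aX ?bX // dimX dimv_vline2.
move=> /eqP <-; split=> //; first by rewrite memvE addvSl.
by rewrite memvE addvSr.
Qed.

Section ConstantIntersection.
Variables (U : {set subsp}) (s : nat).
Hypothesis dimU : forall X, X \in U -> X <> 0%VS -> \dim X = (2 * s)%N.
Hypothesis capU : forall X Y, X \in U -> Y \in U -> X <> 0%VS -> Y <> 0%VS -> X <> Y ->
  \dim (X :&: Y) = s.

Let evenU X : X \in U -> ~~ odd (\dim X).
Proof.
by move=> XU; have [-> | /eqP X_neq0] := eqVneq X 0%VS; rewrite ?dimv0 // dimU // oddM.
Qed.

Lemma double_card_lt_cap_ge2 : 2 <= s -> 2 <= n -> 2 * #|U| < #|Pqn F n|.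
Proof.
move=> s_ge2 n_ge2.
have [v v_neq0] : exists v, v \notin (0%VS : subsp).
  by apply: exists_notin_vspace; rewrite dimv0 dim_fullv; lia.
have [H [dimH _ vH]] := exists_hyperplane_notin v_neq0.
have [W dimW] : exists W : subsp, \dim W = 2 by apply: exists_vspace_dim; rewrite dim_fullv.
apply: (double_card_lt_parity (L := <[v]>%VS) (H := H) (W := W)) => //.
- exact: dim_vline_notin v_neq0.
- by rewrite dimH dim_fullv.
- exact: vline_cap_eq0.
- move=> X Y XU YU XH YH eq_cap; apply/eqP; apply: contraT => /eqP X_neqY.
  have X_neq0 : X <> 0%VS by move=> X_eq0; move: XH; rewrite X_eq0 sub0v.
  have Y_neq0 : Y <> 0%VS by move=> Y_eq0; move: YH; rewrite Y_eq0 sub0v.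
  have /dimvS : (X :&: H <= X :&: Y)%VS by rewrite subv_cap capvSl eq_cap capvSl.
  have := dimv_cap_hyperplane dimH XH.
  by rewrite (dimU XU X_neq0) (capU XU YU X_neq0 Y_neq0 X_neqY); lia.
- by rewrite dimW.
- apply/negP => WU; have W_neq0 : W <> 0%VS by move=> W_eq0; move: dimW; rewrite W_eq0 dimv0.
  by move: (dimU WU W_neq0); rewrite dimW; lia.
Qed.

Lemma double_card_lt_cap1 X0 Y0 : s = 1%N -> 4 <= n ->
  X0 \in U -> Y0 \in U -> X0 <> 0%VS -> Y0 <> 0%VS -> X0 <> Y0 ->
  2 * #|U| < #|Pqn F n|.
Proof.
move=> s1 n_ge4 X0U Y0U X0_neq0 Y0_neq0 X0_neqY0.
have dimU2 X : X \in U -> X <> 0%VS -> \dim X = 2 by move=> XU X_neq0; rewrite dimU // s1.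
have capU1 X Y : X \in U -> Y \in U -> X <> 0%VS -> Y <> 0%VS -> X <> Y ->
    \dim (X :&: Y) = 1%N by move=> *; rewrite capU // s1.
pose p := (X0 :&: Y0)%VS; have dim_p : \dim p = 1%N by apply: capU1.
have [W dimW] : exists W : subsp, \dim W = 4 by apply: exists_vspace_dim; rewrite dim_fullv.
have evenW : ~~ odd (\dim W) by rewrite dimW.
have W_notin : W \notin U.
  apply/negP => WU; have W_neq0 : W <> 0%VS by move=> W_eq0; move: dimW; rewrite W_eq0 dimv0.
  by move: (dimU2 W WU W_neq0); rewrite dimW.
case: (pickP [pred Z | [&& Z \in U, Z != 0%VS & ~~ (p <= Z)%VS]]) => [Z | star].
  case/and3P => ZU /eqP Z_neq0 pZ.
  have UW := subv_add_all_of_not_through (U := [pred X | X \in U]) dimU2 capU1 X0U Y0U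
    X0_neq0 Y0_neq0 X0_neqY0 ZU Z_neq0 pZ.
  have dim_W3 : \dim (X0 + Y0) = 3.
    have := dimv_sum_cap X0 Y0; rewrite -/p dim_p (dimU2 _ X0U) // (dimU2 _ Y0U) //; lia.
  have [v v_notin] : exists v, v \notin (X0 + Y0)%VS.
    by apply: exists_notin_vspace; rewrite dim_W3 dim_fullv; lia.
  have [H [dimH W3H vH]] := exists_hyperplane_notin v_notin.
  apply: (double_card_lt_parity (L := <[v]>%VS) (H := H) (W := W)) => //.
  - exact: dim_vline_notin v_notin.
  - by rewrite dimH dim_fullv.
  - exact: vline_cap_eq0.
  - by move=> X Y XU _ /negP XH; case: XH; apply: subv_trans W3H; apply: UW.
have p_sub X : X \in U -> X <> 0%VS -> (p <= X)%VS.
  by move=> XU /eqP X_neq0; move: (star X); rewrite /= XU X_neq0 /= => /negbFE.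
have add_p X : X \in U -> ~~ (X <= p^C)%VS -> (p + X :&: p^C)%VS = X.
  move=> XU XH; have X_neq0 : X <> 0%VS by move=> X_eq0; move: XH; rewrite X_eq0 sub0v.
  by rewrite capvC vspace_modl ?p_sub // addv_complf capfv.
apply: (double_card_lt_parity (L := p) (H := (p^C)%VS) (W := W)) => //.
- by rewrite dimv_compl dim_fullv dim_p; lia.
- exact: capv_compl.
- by move=> X Y XU YU XH YH eq_cap; rewrite -(add_p X) // eq_cap add_p.
Qed.

End ConstantIntersection.

Lemma card_grass1_ge : 3 <= n -> q ^ 2 + q + 1 <= #|grass 1|.
Proof.
move=> n_ge3; have q_gt1 : 1 < q := finNzRing_gt1 F.
rewrite -(leq_pmul2r (_ : 0 < q.-1)); last by lia.
rewrite card_grass1 -pred_expn3 -!subn1 leq_sub2r // leq_pexp2l //; lia.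
Qed.

End Subspaces.

Lemma double_card_le_planes3 (F : finFieldType) (U : {set subsp F 3}) :
  (forall X, X \in U -> X <> 0%VS -> \dim X = 2) ->
  2 * #|U| <= #|Pqn F 3| /\ (2 * #|U| = #|Pqn F 3| -> #|U| = #|F| ^ 2 + #|F| + 2).
Proof.
move=> dimU; have q_gt1 : 1 < #|F| := finNzRing_gt1 F.
have card_lines : #|grass F 3 1| = #|F| ^ 2 + #|F| + 1.
  apply/eqP; rewrite -(eqn_pmul2r (_ : 0 < #|F|.-1)) ?card_grass1 ?pred_expn3 //; lia.
have card_planes : #|grass F 3 2| = #|F| ^ 2 + #|F| + 1.
  have pos : 0 < (#|F| ^ 2).-1 * (#|F| ^ 2 - #|F|) by rewrite muln_gt0; apply/andP; split; nia.
  apply/eqP; rewrite -(eqn_pmul2r pos) card_grass2 pred_expn3 subn_expn3 pred_expn2.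
  by apply/eqP; ring.
have U_sub : U \subset [set 0%VS : subsp F 3] :|: grass F 3 2.
  apply/subsetP => X XU; rewrite !inE.
  by have [-> | /eqP X_neq0] := eqVneq X 0%VS; rewrite ?eqxx // dimU.
have := leq_trans (subset_leq_card U_sub) (leq_card_setU _ _); rewrite cards1 => U_le.
have P_ge : 2 * (#|F| ^ 2 + #|F| + 1) + 2 <= #|Pqn F 3|.
  have -> : #|Pqn F 3| = #|grass F 3 0| + #|grass F 3 1| + #|grass F 3 2| + #|grass F 3 3|.
    by rewrite card_Pqn_grass !big_ord_recr big_ord0.
  rewrite card_lines card_planes.
  have : 0 < #|grass F 3 0| by apply/card_gt0P; exists 0%VS; rewrite inE dimv0.
  have : 0 < #|grass F 3 3| by apply/card_gt0P; exists fullv; rewrite inE dim_fullv.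
  lia.
by split=> [|eq_UP]; lia.
Qed.

Lemma dS0v (F : finFieldType) n (X : subsp F n) : dS X 0%VS = \dim X.
Proof. by rewrite /dS capv0 dimv0 muln0 addn0 subn0. Qed.

Lemma equidistant_code_cap (F : finFieldType) n (U : {set subsp F n}) X0 Y0 :
  equidistant_linear_code U -> X0 \in U -> Y0 \in U ->
  X0 <> 0%VS -> Y0 <> 0%VS -> X0 <> Y0 ->
  let s := \dim (X0 :&: Y0) in
  [/\ 0 < s, forall X, X \in U -> X <> 0%VS -> \dim X = (2 * s)%N
   & forall X Y, X \in U -> Y \in U -> X <> 0%VS -> Y <> 0%VS -> X <> Y ->
       \dim (X :&: Y) = s].
Proof.
move=> [[U0 _] [r dS_r]] X0U Y0U X0_neq0 Y0_neq0 /eqP X0_neqY0 s.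
have dim_r X : X \in U -> X <> 0%VS -> \dim X = r.
  by move=> XU /eqP X_neq0; rewrite -dS0v dS_r.
have r_2s : r = (2 * s)%N.
  have := dS_r X0 Y0 X0U Y0U X0_neqY0; rewrite /dS (dim_r X0) // (dim_r Y0) // -/s.
  by have := dimvS (capvSl X0 Y0); rewrite -/s (dim_r X0) //; lia.
have dimU X : X \in U -> X <> 0%VS -> \dim X = (2 * s)%N by rewrite -r_2s; apply: dim_r.
split=> // [|X Y XU YU X_neq0 Y_neq0 /eqP X_neqY].
  by rewrite lt0n; apply/eqP => s0; move: (dimU X0 X0U X0_neq0); rewrite s0 => /dimv0_eq.
have := dS_r X Y XU YU X_neqY; have := dimvS (capvSl X Y).
by rewrite /dS (dimU X) // (dimU Y) //; lia.
Qed.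

Theorem equidistant_code_card (F : finFieldType) n (U : {set subsp F n}) :
  3 <= n -> equidistant_linear_code U ->
  2 * #|U| <= #|Pqn F n| /\
  (2 * #|U| = #|Pqn F n| -> n = 3 /\ #|U| = #|F| ^ 2 + #|F| + 2).
Proof.
move=> n_ge3 codeU.
have strict : 2 * #|U| < #|Pqn F n| -> 2 * #|U| <= #|Pqn F n| /\
    (2 * #|U| = #|Pqn F n| -> n = 3 /\ #|U| = #|F| ^ 2 + #|F| + 2).
  by move=> lt_UP; split=> [|eq_UP]; lia.
have [U_le2 | U_gt2] := leqP #|U| 2.
  apply: strict; have := card_grass1_ge F n_ge3.
  have : 2 ^ 2 <= #|F| ^ 2 by rewrite leq_exp2r ?finNzRing_gt1.
  have : #|grass F n 1| <= #|Pqn F n| by apply/subset_leq_card/subsetT.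
  lia.
have /card_gt1P [X0 [Y0 [X0U' Y0U' /eqP X0_neqY0]]] : 1 < #|U :\ (0%VS : subsp F n)|.
  by move: U_gt2; rewrite (cardsD1 (0%VS : subsp F n)) codeU.1.1.
move: X0U' Y0U'; rewrite !inE => /andP [/eqP X0_neq0 X0U] /andP [/eqP Y0_neq0 Y0U].
have [s_gt0 dimU capU] := equidistant_code_cap codeU X0U Y0U X0_neq0 Y0_neq0 X0_neqY0.
have [s_ge2 | s_lt2] := leqP 2 (\dim (X0 :&: Y0)).
  by apply: strict; apply: (double_card_lt_cap_ge2 dimU capU s_ge2); lia.
have s1 : \dim (X0 :&: Y0) = 1%N by lia.
have [n_ge4 | n_lt4] := leqP 4 n.
  by apply: strict; apply: (double_card_lt_cap1 dimU capU s1 n_ge4 X0U Y0U).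
have n3 : n = 3 by lia.
subst n; have dimU2 X : X \in U -> X <> 0%VS -> \dim X = 2 by move=> XU X_neq0; rewrite dimU // s1.
by have [le_UP eq_UP] := double_card_le_planes3 dimU2; split=> // /eq_UP.
Qed.

Section ExponentTwo.
Variables (T : finType) (op : T -> T -> T) (z : T).
Hypotheses (opA : associative op) (op0 : left_id z op) (opK : forall x, op x x = z).

Definition exponent2_group : Type := T.
HB.instance Definition _ := Finite.on exponent2_group.
Let opV : left_inverse z (@id exponent2_group) op. Proof. exact: opK. Qed.
HB.instance Definition _ := Finite_isGroup.Build exponent2_group opA op0 opV.

Lemma card_exponent2 : exists k, #|T| = 2 ^ k.
Proof.
have T_gt0 : 0 < #|T| by apply/card_gt0P; exists z.
suff /p_natP [k ->] : 2.-nat #|T| by exists k.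
apply/(pnatP _ T_gt0) => p p_prime p_dvdT.
have p_dvdG : p %| #|[set: exponent2_group]|.
  by rewrite cardsT (@bij_eq_card exponent2_group T id) //; exists id.
have [x _ ox] := Cauchy p_prime p_dvdG.
have : (#[x] %| 2)%g by rewrite order_dvdn expgS expg1; apply/eqP/opK.
by rewrite ox (dvdn_prime2 p_prime) // => /eqP ->.
Qed.

End ExponentTwo.

Lemma card_linear_code (F : finFieldType) n (U : {set subsp F n}) :
  linear_code U -> exists k, #|U| = 2 ^ k.
Proof.
move=> [U0 [op [op_in [opA [_ [op0 [_ [opK _]]]]]]]].
pose opU (X Y : {X | X \in U}) : {X | X \in U} :=
  exist _ (op (val X) (val Y)) (op_in _ _ (valP X) (valP Y)).
pose zU : {X | X \in U} := exist _ 0%VS U0.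
have opUA : associative opU by move=> X Y Z; apply: val_inj; apply: opA; apply: valP.
have opU0 : left_id zU opU by move=> X; apply: val_inj; apply: (op0 _ (valP X)).1.
have opUK X : opU X X = zU by apply: val_inj; apply: opK (valP X).
have [k cardU] := card_exponent2 opUA opU0 opUK.
by exists k; rewrite -cardU card_sig; apply: eq_card => X; rewrite inE.
Qed.

Lemma card_finField_prime_power (F : finFieldType) :
  exists2 p, prime p & #|F| = p ^ logn p #|F|.
Proof.
have /is_abelemP [p p_prime /abelem_pgroup F_pgroup] := finField_is_abelem F.
by exists p => //; have := card_pgroup F_pgroup; rewrite cardsT.
Qed.

Lemma prime_power_neq90 p k : prime p -> p ^ k <> 90.
Proof.
move=> p_prime pk90; have : 2 %| p ^ k by rewrite pk90.
rewrite Euclid_dvdX // (dvdn_prime2 _ p_prime) // => /andP [/eqP p2 _].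
have : 3 %| p ^ k by rewrite pk90.
by rewrite -p2 Euclid_dvdX.
Qed.

Lemma bigmax_witness (I : finType) (P : pred I) (f : I -> nat) :
  0 < \max_(i | P i) f i -> exists2 i, P i & \max_(i | P i) f i = f i.
Proof.
case: (pickP P) => [i0 Pi0 _ | P0]; last by rewrite big_pred0.
by exists [arg max_(i > i0 | P i) f i]; [case: arg_maxnP | apply: bigmax_eq_arg].
Qed.

Local Open Scope ring_scope.

Lemma ratio_le_half (a b : nat) : (0 < b)%N -> (2 * a <= b)%N -> a%:R / b%:R <= 1 / 2 :> rat.
Proof.
move=> b_gt0; rewrite -(ler_nat rat) natrM ler_pdivrMr ?ltr0n //; lra.
Qed.

Lemma ratio_eq_half (a b : nat) : (0 < b)%N -> a%:R / b%:R = 1 / 2 :> rat -> (2 * a)%N = b.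
Proof.
move=> b_gt0 /(congr1 ( *%R^~ b%:R)); rewrite divfK ?pnatr_eq0 -?lt0n // => eq_ab.
by apply/eqP; rewrite -(eqr_nat rat) natrM eq_ab; apply/eqP; field.
Qed.

Theorem lemma10 (F : finFieldType) (n : nat) (hn : (3 <= n)%N) :
  ((Eqn F n)%:R / #|Pqn F n|%:R <= 1 / 2 :> rat) /\
  ((Eqn F n)%:R / #|Pqn F n|%:R = 1 / 2 :> rat ->
     n = 3%N /\ (#|F| = 2%N \/ #|F| = 5%N)).
Proof.
have P_gt0 : (0 < #|Pqn F n|)%N by apply/card_gt0P; exists 0%VS; rewrite inE.
have E_le : (2 * Eqn F n <= #|Pqn F n|)%N.
  rewrite mulnC -leq_divRL //; apply/bigmax_leqP => U /asboolP codeU.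
  by rewrite leq_divRL // mulnC; case: (equidistant_code_card hn codeU).
split=> [|/(ratio_eq_half P_gt0) E_eq]; first exact: ratio_le_half.
have E_gt0 : (0 < Eqn F n)%N by lia.
have [U /asboolP codeU EU] := bigmax_witness E_gt0.
have [n3 cardU] : n = 3%N /\ #|U| = (#|F| ^ 2 + #|F| + 2)%N.
  by apply: (equidistant_code_card hn codeU).2; rewrite -EU.
have [k cardU2] := card_linear_code codeU.1.
have q_gt1 : (1 < #|F|)%N := finNzRing_gt1 F.
have [p p_prime cardF] := card_finField_prime_power F.
have q_neq90 : #|F| <> 90%N by rewrite cardF; apply: prime_power_neq90.
have := @ramanujan_nagell #|F| k; rewrite mulnn -cardU cardU2 => /(_ erefl).
by rewrite !inE => q_cand; split=> //; lia.
Qed.
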